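(* For every $n\ge0$ there are numbers $C_n^A$, indexed by the subsets $A\subseteq\{a_1,\dots,a_k\}$, with $0<C_n^A<1$ for all $A$ and $\sum_A C_n^A=1$, such that for all $x,y$ $$L_n(x,y)=\sum_{A\subseteq\{a_1,\dots,a_k\}} C_n^A\Big[\prod_{a_i\in A}(x-a_i)(y-a_i)\Big]K^A_{n-|A|}(x,y),$$ where $|A|$ is the cardinality of $A$ and $K_m^A\equiv0$ for $m<0$.
   Context: Let $\mu$ be a positive Borel measure on $\mathbb R$ with infinitely many points of increase and all moments finite. Let $a_1,\dots,a_k\in\mathbb R$ be distinct with $\mu(\{a_i\})=0$, $M_i>0$, $\nu=\mu+\sum_{i=1}^kM_i\delta_{a_i}$. $L_n(x,y)=\sum_{j=0}^nP_j(x)P_j(y)$ where $(P_j)$ are the orthonormal polynomials (positive leading coefficients) for $\nu$. For $A\subseteq\{a_1,\dots,a_k\}$, $d\mu^A(x)=\prod_{a_i\in A}(x-a_i)^2\,d\mu(x)$ (so $\mu^\emptyset=\mu$), and $K_m^A(x,y)$ is the $m$-th kernel $\sum_{j=0}^m q_j(x)q_j(y)$ for the orthonormal polynomials $(q_j)$ of $\mu^A$. *)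

From HB Require Import structures.
From mathcomp Require Import all_boot all_order all_algebra.
From mathcomp Require Import all_classical all_reals all_analysis.
Set Implicit Arguments. Unset Strict Implicit. Unset Printing Implicit Defensive.
Import Order.TTheory GRing.Theory Num.Theory.
Import numFieldNormedType.Exports.
Local Open Scope classical_set_scope.
Local Open Scope ring_scope.

Section Defs.
Variable R : realType.
Notation RT := (measurableTypeR R).

Definition point_of_increase (mu : {measure set RT -> \bar R}) (x : R) : Prop :=
  forall e : R, 0 < e ->
    let I : set RT := `](x - e), (x + e)[%classic in (0 < mu I)%E.

Definition infinitely_many_points_of_increase (mu : {measure set RT -> \bar R}) : Prop :=
  ~ finite_set [set x : R | point_of_increase mu x].

Definition finite_moments (mu : {measure set RT -> \bar R}) : Prop :=
  forall j : nat, mu.-integrable [set: RT] (fun x : RT => ((x : R) ^+ j)%:E).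

Definition nu_meas_seq k (mu : {measure set RT -> \bar R}) (a : 'I_k -> R)
    (M : 'I_k -> {posnum R}) : {measure set RT -> \bar R}^nat :=
  fun j => if j is j'.+1 then
             match (insub j' : option 'I_k) with
             | Some i => mscale ((M i)%:num%:nng) (@dirac _ RT (a i) R)
             | None => @mzero _ RT R
             end
           else mu.

(* nu_meas = mu + \sum_{i<k} M_i delta_{a_i} *)
Definition nu_meas k (mu : {measure set RT -> \bar R}) (a : 'I_k -> R)
    (M : 'I_k -> {posnum R}) : {measure set RT -> \bar R} :=
  msum (nu_meas_seq mu a M) k.+1.

Definition poly_ip (m : {measure set RT -> \bar R}) (p q : {poly R}) : R :=
  Rintegral m [set: RT] (fun x : RT => p.[x] * q.[x]).

Definition weightA k (a : 'I_k -> R) (A : {set 'I_k}) (x : R) : R :=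
  \prod_(i in A) (x - a i) ^+ 2.

(* inner product w.r.t. d mu^A = prod_{i in A}(x-a_i)^2 d mu *)
Definition poly_ip_A k (mu : {measure set RT -> \bar R}) (a : 'I_k -> R)
    (A : {set 'I_k}) (p q : {poly R}) : R :=
  Rintegral mu [set: RT] (fun x : RT => weightA a A x * (p.[x] * q.[x])).

Definition orthonormal_polys (ip : {poly R} -> {poly R} -> R) (P : nat -> {poly R}) : Prop :=
  forall i j : nat,
    size (P i) = i.+1 /\ 0 < lead_coef (P i) /\ ip (P i) (P j) = (i == j)%:R.

Definition ker_poly (P : nat -> {poly R}) (m : nat) (x y : R) : R :=
  \sum_(j < m.+1) (P j).[x] * (P j).[y].

Definition kernel_shift (P : nat -> {poly R}) (n d : nat) (x y : R) : R :=
  if (d <= n)%N then ker_poly P (n - d) x y else 0.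

End Defs.

From HB Require Import structures.
From mathcomp Require Import all_boot all_order all_algebra.
From mathcomp Require Import all_classical all_reals all_analysis.
From mathcomp Require Import measurable_realfun lebesgue_integral.
From mathcomp Require Import ring lra.
Import Order.TTheory GRing.Theory Num.Theory.
Import numFieldNormedType.Exports.
Set Implicit Arguments. Unset Strict Implicit.
Local Open Scope ring_scope.

(* Add the point masses one at a time.  Adding a mass m at b to a form F is an
   Uvarov-type update of reproducing kernels: if K is the kernel of F on
   polynomials of degree <= s and K' the kernel of (p, q) |-> F((x-b)p, (x-b)q)
   in degree <= s-1, then the kernel of F + m delta_b is
     c K(x, y) + (1 - c) (x - b) (y - b) K'(x, y),   c = 1 / (1 + m K(b, b)),
   and 0 < c < 1 because K(b, b) > 0.  An induction on the number of masses,
   carried out simultaneously for all weights prod_(i in B) (x - a_i)^2, writes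
   the kernel of nu as a convex combination of the kernels of the mu^A; the
   weights are products of the c's and (1 - c)'s.  Uniqueness of reproducing
   kernels in a fixed degree identifies this combination with L_n. *)

Section ReproducingKernel.
Variable R : realType.
Implicit Types (p r u v : {poly R}) (b x y : R).

(* [kerp Q s x] is the polynomial y |-> K_(s-1)(x, y): the index s counts the
   orthonormal polynomials used, matching bounds [size p <= s] (degree < s). *)
Definition kerp (Q : nat -> {poly R}) (s : nat) (x : R) : {poly R} :=
  \sum_(j < s) (Q j).[x] *: Q j.

Lemma horner_kerp Q s x y : (kerp Q s x).[y] = \sum_(j < s) (Q j).[x] * (Q j).[y].
Proof. by rewrite horner_sum; apply: eq_bigr => j _; rewrite hornerZ. Qed.

Lemma ker_polyE Q n x y : ker_poly Q n x y = (kerp Q n.+1 x).[y].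
Proof. by rewrite horner_kerp. Qed.

Lemma kerp_diag_ge0 Q s x : 0 <= (kerp Q s x).[x].
Proof. by rewrite horner_kerp sumr_ge0 // => j _; rewrite -expr2 sqr_ge0. Qed.

Lemma kerp_diag_gt0 F Q s x :
  orthonormal_polys F Q -> (0 < s)%N -> 0 < (kerp Q s x).[x].
Proof.
case: s => // s hQ _; rewrite horner_kerp big_ord_recl /=.
have [sQ0 [lQ0 _]] := hQ 0%N 0%N; rewrite /lead_coef sQ0 in lQ0.
apply: ltr_wpDr; first by apply: sumr_ge0 => j _; rewrite -expr2 sqr_ge0.
by rewrite (size1_polyC (eq_leq sQ0)) hornerC mulr_gt0.
Qed.

Definition reproducing_kernel (F : {poly R} -> {poly R} -> R) (s : nat)
    (K : R -> {poly R}) : Prop :=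
  forall x, (size (K x) <= s)%N /\
            forall p, (size p <= s)%N -> F (K x) p = p.[x].

Lemma divide_at_point s b u p :
  u.[b] != 0 -> (size u <= s.+1)%N -> (size p <= s.+1)%N ->
  exists2 r : {poly R}, (size r <= s)%N & p = (p.[b] / u.[b]) *: u + r * ('X - b%:P).
Proof.
move=> ub su sp; set al := p.[b] / u.[b].
have root_b : root (p - al *: u) b.
  by rewrite rootE hornerD hornerN hornerZ /al divfK // subrr.
exists ((p - al *: u) %/ ('X - b%:P)).
  rewrite size_divp ?polyXsubC_eq0 // size_XsubC leq_subLR add1n.
  rewrite (leq_trans (size_polyD _ _)) // geq_max sp size_polyN.
  exact: leq_trans (size_scale_leq _ _) su.
by rewrite divpK ?dvdp_XsubCl // addrC subrK.
Qed.

Definition point_mass_kernel (K1 K2 : R -> {poly R}) (b c x : R) : {poly R} :=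
  c *: K1 x + ((1 - c) * (x - b)) *: (('X - b%:P) * K2 x).

Section BilinearForm.
Variable F : {poly R} -> {poly R} -> R.
Hypothesis F_sym : forall p q, F p q = F q p.
Hypothesis F_linear : forall p c u v, F p (c *: u + v) = c * F p u + F p v.

Lemma form0r p : F p 0 = 0.
Proof. by move: (F_linear p (-1) 0 0); rewrite scaler0 addr0 mulN1r addNr. Qed.

Lemma formDr p u v : F p (u + v) = F p u + F p v.
Proof. by move: (F_linear p 1 u v); rewrite scale1r mul1r. Qed.

Lemma formZr p c u : F p (c *: u) = c * F p u.
Proof. by rewrite -[c *: u]addr0 F_linear form0r addr0. Qed.

Lemma formBr p u v : F p (u - v) = F p u - F p v.
Proof. by rewrite formDr -scaleN1r formZr mulN1r. Qed.

Lemma formDl p u v : F (u + v) p = F u p + F v p.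
Proof. by rewrite F_sym formDr !(F_sym p). Qed.

Lemma formZl p c u : F (c *: u) p = c * F u p.
Proof. by rewrite F_sym formZr (F_sym p). Qed.

Lemma form_suml p (I : Type) (r : seq I) (P : pred I) (G : I -> {poly R}) :
  F (\sum_(i <- r | P i) G i) p = \sum_(i <- r | P i) F (G i) p.
Proof.
rewrite F_sym (big_morph (F p) (formDr p) (form0r p)).
by apply: eq_bigr => i _; rewrite F_sym.
Qed.

Lemma reproducing_kernel0 : reproducing_kernel F 0 (fun=> 0).
Proof.
move=> x; split=> [|p]; first by rewrite size_poly0.
by rewrite leqn0 size_poly_eq0 => /eqP ->; rewrite hornerC form0r.
Qed.

Lemma reproducing_kernel_sym s K x y :
  reproducing_kernel F s K -> (K x).[y] = (K y).[x].
Proof.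
move=> hK; have [sKx rKx] := hK x; have [sKy rKy] := hK y.
by rewrite -rKy // F_sym rKx.
Qed.

Lemma point_mass_kernel_reproducing (F' H : {poly R} -> {poly R} -> R) b m c s K1 K2 :
  (forall p q, F' p q = F p q + m * p.[b] * q.[b]) ->
  (forall p q, H p q = F (('X - b%:P) * p) (('X - b%:P) * q)) ->
  reproducing_kernel F s.+1 K1 -> reproducing_kernel H s K2 ->
  (K1 b).[b] != 0 -> c * (1 + m * (K1 b).[b]) = 1 ->
  reproducing_kernel F' s.+1 (point_mass_kernel K1 K2 b c).
Proof.
move=> F'E HE hK1 hK2 K1bb hc x.
have [sK1x rK1x] := hK1 x; have [sK2x rK2x] := hK2 x.
have sXK2 : (size (('X - b%:P) * K2 x)%R <= s.+1)%N.
  by rewrite (leq_trans (size_polyMleq _ _)) // size_XsubC; case: (size (K2 x)) sK2x.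
split=> [|p sp].
  rewrite (leq_trans (size_polyD _ _)) // geq_max.
  by rewrite !(leq_trans (size_scale_leq _ _)) ?sK1x.
have [sK1b rK1b] := hK1 b.
have [r sr pE] := divide_at_point K1bb sK1b sp.
set al := p.[b] / (K1 b).[b] in pE.
have pb : p.[b] = al * (K1 b).[b] by rewrite /al divfK.
have px : p.[x] = al * (K1 b).[x] + r.[x] * (x - b).
  by rewrite {1}pE hornerD hornerZ hornerM hornerXsubC.
have FXK2p : F (('X - b%:P) * K2 x) p = r.[x].
  rewrite {1}pE formDr formZr F_sym rK1b ?sXK2 // hornerM hornerXsubC subrr mul0r.
  by rewrite mulr0 add0r [r * _]mulrC -HE rK2x.
rewrite F'E /point_mass_kernel formDl !formZl rK1x // FXK2p.
rewrite hornerD !hornerZ hornerM hornerXsubC subrr mul0r mulr0 addr0.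
rewrite (reproducing_kernel_sym x b hK1) pb px.
have -> : c * (al * (K1 b).[x] + r.[x] * (x - b)) + (1 - c) * (x - b) * r.[x] +
   m * (c * (K1 b).[x]) * (al * (K1 b).[b]) =
   al * (K1 b).[x] * (c * (1 + m * (K1 b).[b])) + r.[x] * (x - b) by ring.
by rewrite hc mulr1.
Qed.

Variable Q : nat -> {poly R}.
Hypothesis Q_orthonormal : orthonormal_polys F Q.

Lemma orthonormal_expansion s p :
  (size p <= s)%N -> p = \sum_(j < s) F (Q j) p *: Q j.
Proof.
elim: s p => [|s IH] p hp.
  by rewrite big_ord0; apply/eqP; rewrite -size_poly_eq0 -leqn0.
have [sQ [lQ _]] := Q_orthonormal s s.
have lQ0 : lead_coef (Q s) != 0 by rewrite gt_eqF.
have lQs : lead_coef (Q s) = (Q s)`_s by rewrite /lead_coef sQ.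
set c := p`_s / lead_coef (Q s).
set p' := p - c *: Q s.
have sp' : (size p' <= s)%N.
  apply/leq_sizeP => j; rewrite leq_eqVlt => /orP[/eqP <-|hj].
    by rewrite coefB coefZ -lQs /c divfK // subrr.
  have : (size p' <= s.+1)%N.
    rewrite (leq_trans (size_polyD _ _)) // geq_max hp size_polyN.
    by rewrite (leq_trans (size_scale_leq _ _)) // sQ.
  by move/leq_sizeP; apply.
have Qjp' (j : 'I_s) : F (Q j) p' = F (Q j) p.
  have [_ [_ Qjs]] := Q_orthonormal j s.
  by rewrite /p' formBr formZr Qjs ltn_eqF // mulr0 subr0.
have Qsp : F (Q s) p = c.
  rewrite -[p](subrK (c *: Q s)) -/p' formDr formZr (IH p' sp').
  rewrite F_sym form_suml big1 ?add0r => [|j _].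
    by have [_ [_ ->]] := Q_orthonormal s s; rewrite eqxx mulr1.
  by rewrite formZl; have [_ [_ ->]] := Q_orthonormal j s; rewrite ltn_eqF // mulr0.
rewrite big_ord_recr /= Qsp -{1}[p](subrK (c *: Q s)) -/p'; congr (_ + _).
by rewrite {1}(IH p' sp'); apply: eq_bigr => j _; rewrite Qjp'.
Qed.

Lemma size_kerp s x : (size (kerp Q s x) <= s)%N.
Proof.
rewrite (leq_trans (size_sum _ _ _)) //; apply/bigmax_leqP => j _.
by rewrite (leq_trans (size_scale_leq _ _)) //; have [-> _] := Q_orthonormal j j.
Qed.

Lemma kerp_reproducing s : reproducing_kernel F s (kerp Q s).
Proof.
move=> x; split=> [|p hp]; first exact: size_kerp.
rewrite {2}(orthonormal_expansion hp) form_suml horner_sum.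
by apply: eq_bigr => j _; rewrite formZl hornerZ F_sym mulrC.
Qed.

Lemma reproducing_kernel_unique s K x :
  reproducing_kernel F s K -> K x = kerp Q s x.
Proof.
move=> hK; have [sK rK] := hK x; have [_ rk] := kerp_reproducing s x.
apply/eqP; rewrite -subr_eq0; apply/eqP.
have sD : (size (K x - kerp Q s x)%R <= s)%N.
  by rewrite (leq_trans (size_polyD _ _)) // geq_max sK size_polyN size_kerp.
rewrite (orthonormal_expansion sD) big1 // => j _.
have sQj : (size (Q j) <= s)%N by have [-> _] := Q_orthonormal j j.
by rewrite formBr !(F_sym (Q j)) rK // rk // subrr scale0r.
Qed.

End BilinearForm.

End ReproducingKernel.

Section PolynomialIntegral.
Variable R : realType.
Local Notation RT := (measurableTypeR R).
Variable mu : {measure set RT -> \bar R}.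
Hypothesis mu_moments : finite_moments mu.

Definition int_poly (p : {poly R}) : R := Rintegral mu [set: RT] (fun x : RT => p.[x]).

Lemma integrable_horner (p : {poly R}) :
  mu.-integrable [set: RT] (EFin \o (fun x : RT => p.[x])).
Proof.
have -> : EFin \o (fun x : RT => p.[x]) =
    (fun x : RT => \sum_(i < size p) ((p`_i)%:E * ((x : R) ^+ i)%:E))%E.
  apply/funext => x /=; rewrite horner_coef -sumEFin.
  by apply: eq_bigr => i _; rewrite EFinM.
apply: (integrable_sum measurableT) => i _.
by apply: integrableZl; [exact: measurableT | exact: mu_moments].
Qed.

Lemma int_polyZD c u v : int_poly (c *: u + v) = c * int_poly u + int_poly v.
Proof.
rewrite /int_poly; under eq_Rintegral do rewrite hornerD hornerZ.
rewrite RintegralD //; last exact: integrable_horner.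
  by rewrite RintegralZl //; exact: integrable_horner.
under [X in _.-integrable _ X]eq_fun do rewrite /= -hornerZ.
exact: integrable_horner.
Qed.

Variables (k : nat) (a : 'I_k -> R) (M : 'I_k -> {posnum R}).

Lemma ge0_integral_nu_meas (g : RT -> \bar R) :
  (forall x, 0 <= g x)%E -> measurable_fun [set: RT] g ->
  (\int[nu_meas mu a M]_(x in [set: RT]) g x =
   \int[mu]_(x in [set: RT]) g x + \sum_(i < k) ((M i)%:num)%:E * g (a i))%E.
Proof.
move=> g0 mg.
rewrite ge0_integral_measure_sum // big_ord_recl /=; congr (_ + _)%E.
apply: eq_bigr => i _.
by rewrite add0n valK ge0_integral_mscale // integral_dirac // diracT mul1e.
Qed.

Lemma Rintegral_nu_meas_horner (p : {poly R}) :
  Rintegral (nu_meas mu a M) [set: RT] (fun x : RT => p.[x]) =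
  int_poly p + \sum_(i < k) (M i)%:num * p.[a i].
Proof.
set f := EFin \o (fun x : RT => p.[x]).
have mf : measurable_fun [set: RT] f by apply/measurable_EFinP; exact: measurable_poly.
have fi := integrable_horner p.
have pos_fin := integrable_fin_num measurableT (integrable_funepos measurableT fi).
have neg_fin := integrable_fin_num measurableT (integrable_funeneg measurableT fi).
rewrite /int_poly /Rintegral -/f (integralE _ _ f) (integralE mu _ f).
rewrite (ge0_integral_nu_meas (funepos_ge0 f) (measurable_funepos mf)).
rewrite (ge0_integral_nu_meas (funeneg_ge0 f) (measurable_funeneg mf)).
rewrite -(fineK pos_fin) -(fineK neg_fin).
under eq_bigr do rewrite funeposE /f /= -EFin_max -EFinM.
under [X in (_ - (_ + X))%E]eq_bigr do rewrite funenegE /f /= -EFin_max -EFinM.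
rewrite !sumEFin -!EFinD /= opprD addrACA -sumrB; congr (_ + _).
apply: eq_bigr => i _; rewrite -mulrBr; congr (_ * _).
by rewrite /Order.max; case: ltP => ?; case: ltP => ?; lra.
Qed.

End PolynomialIntegral.

Section ConvexWeights.
Import mathcomp.boot.finset mathcomp.boot.fintype.
Variables (R : realFieldType) (T : finType).
Implicit Types (S A : {set T}) (C : {set T} -> R).

Lemma sum_set_splitU1 (V : nmodType) (b : T) (f : {set T} -> V) :
  \sum_(A : {set T}) f A =
  \sum_(A : {set T} | b \notin A) f A + \sum_(A : {set T} | b \notin A) f (b |: A).
Proof.
rewrite (bigID (fun A : {set T} => b \in A)) /= addrC; congr (_ + _).
rewrite (reindex_onto (fun A : {set T} => b |: A) (fun A : {set T} => A :\ b)) /=.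
  apply: eq_bigl => A; rewrite setU11 /=.
  have [bA|bA] := boolP (b \in A); last by rewrite setU1K ?eqxx.
  by apply/negbTE/eqP => AE; move: bA; rewrite -AE setD11.
by move=> A bA; rewrite setD1K.
Qed.

Definition convex_weights S C : Prop :=
  [/\ forall A, A \subset S -> 0 < C A,
      forall A, ~~ (A \subset S) -> C A = 0
    & \sum_A C A = 1].

Definition uniform_weights S A : R :=
  if A \subset S then #|powerset S|%:R^-1 else 0.

Definition mix_weights (b : T) (c : R) C1 C2 A : R :=
  if b \in A then (1 - c) * C2 (A :\ b) else c * C1 A.

Lemma convex_weights_ge0 S C A : convex_weights S C -> 0 <= C A.
Proof. by case=> C_gt0 C0 _; have [/C_gt0/ltW|/C0->] := boolP (A \subset S). Qed.

Lemma convex_weights_setU1 S C b A :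
  convex_weights S C -> b \notin S -> C (b |: A) = 0.
Proof.
case=> _ C0 _ bS; apply: C0; apply: contra bS => /subsetP; apply.
exact: setU11.
Qed.

Lemma convex_weights_set0 C A : convex_weights set0 C -> C A = (A == set0)%:R.
Proof.
case=> _ C0 C1; have [->|A0] := eqVneq A set0; last by rewrite C0 // subset0.
by rewrite -C1 (bigD1 set0) //= big1 ?addr0 // => A' A'0; rewrite C0 // subset0.
Qed.

Lemma convex_weights_uniform S : convex_weights S (uniform_weights S).
Proof.
have N_gt0 : 0 < (#|powerset S|%:R : R) by rewrite ltr0n card_powerset expn_gt0.
split=> [A AS|A /negbTE AS|]; rewrite /uniform_weights ?AS ?invr_gt0 //.
rewrite -big_mkcond (eq_bigl (fun A => A \in powerset S)) => [|A]; last by rewrite powersetE.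
by rewrite sumr_const -[_ *+ _]mulr_natr mulVf // gt_eqF.
Qed.

Lemma convex_weights_mix S b c C1 C2 :
  b \notin S -> 0 < c < 1 -> convex_weights S C1 -> convex_weights S C2 ->
  convex_weights (b |: S) (mix_weights b c C1 C2).
Proof.
move=> bS /andP[c_gt0 c_lt1] hC1 hC2.
have [C1_gt0 C1_0 _] := hC1; have [C2_gt0 C2_0 _] := hC2.
have sum_notin C : convex_weights S C -> \sum_(A : {set T} | b \notin A) C A = 1.
  move=> hC; have [_ _ <-] := hC.
  rewrite [RHS](sum_set_splitU1 b) [X in _ + X]big1 ?addr0 //.
  by move=> A _; exact: convex_weights_setU1 hC bS.
rewrite /mix_weights; split=> [A AS|A AS|].
- case: ifP => bA; first by rewrite mulr_gt0 ?subr_gt0 // C2_gt0 // subDset.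
  rewrite mulr_gt0 // C1_gt0 //; apply/subsetP => x xA.
  move/subsetP/(_ x xA): AS; rewrite in_setU1 => /orP[/eqP xb|//].
  by rewrite -xb xA in bA.
- case: ifP => bA; first by rewrite C2_0 ?mulr0 // subDset.
  rewrite C1_0 ?mulr0 //; apply: contra AS => AS.
  exact: subset_trans AS (subsetU1 b S).
rewrite (sum_set_splitU1 b); under eq_bigr => A bA do rewrite (negbTE bA).
under [X in _ + X]eq_bigr => A bA do rewrite setU11 setU1K //.
by rewrite -!mulr_sumr !sum_notin // !mulr1 subrKC.
Qed.

Lemma convex_weights_lt1 S C A : convex_weights S C -> S != set0 -> C A < 1.
Proof.
move=> hC S0; have [C_gt0 C0 C_sum] := hC.
have [AS|AS] := boolP (A \subset S); last by rewrite C0 // ltr01.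
have DA : S :\: A != A.
  apply: contraNneq S0 => DA; apply/eqP.
  have A0 : A = set0.
    apply/setP => x; rewrite in_set0; apply/negP => xA.
    by move: (xA); rewrite -{1}DA in_setD xA.
  by move: DA; rewrite A0 setD0.
rewrite -C_sum (bigD1 A) //= (bigD1 (S :\: A)) //= ltrDl.
have := C_gt0 _ (subsetDl S A).
have : 0 <= \sum_(D | (D != A) && (D != S :\: A)) C D.
  by apply: sumr_ge0 => D _; exact: convex_weights_ge0 hC.
lra.
Qed.

Lemma convex_weights_setT_bounds C A :
  (0 < #|T|)%N -> convex_weights setT C -> 0 < C A < 1.
Proof.
move=> T_gt0 hC; have [C_gt0 _ _] := hC.
rewrite C_gt0 ?subsetT // (convex_weights_lt1 _ hC) //.
by rewrite -card_gt0 cardsT.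
Qed.

End ConvexWeights.

Section MassPerturbation.
Import mathcomp.boot.finset mathcomp.boot.fintype.
Variable R : realType.
Variable L : {poly R} -> R.
Hypothesis L_linear : forall c u v, L (c *: u + v) = c * L u + L v.
Variables (k : nat) (a : 'I_k -> R) (M : 'I_k -> R).
Hypothesis a_inj : injective a.
Hypothesis M_gt0 : forall i, 0 < M i.
Implicit Types (S A B : {set 'I_k}) (b : 'I_k) (C : {set 'I_k} -> R).
Implicit Types (p q r u v : {poly R}) (x y : R).

Definition root_poly A : {poly R} := \prod_(i in A) ('X - (a i)%:P).

Definition Lmass S r : R := L r + \sum_(i in S) M i * r.[a i].

Definition mass_ip S B p q : R := Lmass S (root_poly B ^+ 2 * (p * q)).

Lemma Lmass_linear S c u v : Lmass S (c *: u + v) = c * Lmass S u + Lmass S v.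
Proof.
rewrite /Lmass L_linear mulrDr -!addrA; congr (_ + _); rewrite addrCA; congr (_ + _).
rewrite mulr_sumr -big_split /=; apply: eq_bigr => i _.
by rewrite hornerD hornerZ; ring.
Qed.

Lemma mass_ip_sym S B p q : mass_ip S B p q = mass_ip S B q p.
Proof. by rewrite /mass_ip [p * q]mulrC. Qed.

Lemma mass_ip_linear S B p c u v :
  mass_ip S B p (c *: u + v) = c * mass_ip S B p u + mass_ip S B p v.
Proof. by rewrite /mass_ip -Lmass_linear -!mul_polyC; congr (Lmass S _); ring. Qed.

Lemma root_poly_setU1 B b :
  b \notin B -> root_poly (b |: B) = ('X - (a b)%:P) * root_poly B.
Proof. exact: big_setU1. Qed.

Lemma root_poly_neq0 B b : b \notin B -> (root_poly B).[a b] != 0.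
Proof.
move=> bB; rewrite horner_prod; apply/prodf_neq0 => i iB.
by rewrite hornerXsubC subr_eq0; apply: contraNneq bB => /a_inj ->.
Qed.

Lemma mass_ip_setU1 S B b p q : b \notin S ->
  mass_ip (b |: S) B p q =
  mass_ip S B p q + M b * (root_poly B).[a b] ^+ 2 * p.[a b] * q.[a b].
Proof.
by move=> bS; rewrite /mass_ip /Lmass big_setU1 //= !hornerM; ring.
Qed.

Lemma mass_ip_mulXsubC S B b p q : b \notin B ->
  mass_ip S B (('X - (a b)%:P) * p) (('X - (a b)%:P) * q) = mass_ip S (b |: B) p q.
Proof. by move=> bB; rewrite /mass_ip root_poly_setU1 //; congr (Lmass S _); ring. Qed.

Variable q : {set 'I_k} -> nat -> {poly R}.
Hypothesis q_orthonormal : forall A, orthonormal_polys (mass_ip set0 A) (q A).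

(* y |-> sum_A C_A prod_(i in A) (x - a_i)(y - a_i) K^(A :|: B)_(s-1-|A|)(x, y);
   truncated subtraction makes the terms with |A| >= s vanish. *)
Definition kcomb B C s x : {poly R} :=
  \sum_A (C A * (root_poly A).[x]) *: (root_poly A * kerp (q (A :|: B)) (s - #|A|) x).

Lemma horner_kcomb B C s x y : (kcomb B C s x).[y] =
  \sum_A C A * ((root_poly A).[x] * (root_poly A).[y]) *
           (kerp (q (A :|: B)) (s - #|A|) x).[y].
Proof. by rewrite horner_sum; apply: eq_bigr => A _; rewrite hornerZ hornerM; ring. Qed.

Lemma kcomb0 B C : kcomb B C 0 = fun=> 0.
Proof.
apply/funext => x; rewrite /kcomb big1 // => A _.
by rewrite sub0n /kerp big_ord0 mulr0 scaler0.
Qed.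

Lemma kcomb_set0 B C s x : convex_weights set0 C -> kcomb B C s x = kerp (q B) s x.
Proof.
move=> /convex_weights_set0 CE; rewrite /kcomb (bigD1 set0) //= big1 ?addr0.
  by rewrite CE eqxx /root_poly big_set0 hornerC mulr1 scale1r mul1r cards0 subn0 set0U.
by move=> A /negbTE A0; rewrite CE A0 mul0r scale0r.
Qed.

Lemma kcomb_diag_gt0 B C s x :
  (forall A, 0 <= C A) -> 0 < C set0 -> (0 < s)%N -> 0 < (kcomb B C s x).[x].
Proof.
move=> C_ge0 C0_gt0 s_gt0; rewrite horner_kcomb (bigD1 set0) //=.
apply: ltr_wpDr.
  apply: sumr_ge0 => A _; apply: mulr_ge0; last exact: kerp_diag_ge0.
  by rewrite mulr_ge0 // -expr2 sqr_ge0.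
rewrite /root_poly big_set0 hornerC !mulr1 cards0 subn0 set0U mulr_gt0 //.
exact: kerp_diag_gt0 (q_orthonormal _) s_gt0.
Qed.

Lemma kcomb_mix B C1 C2 b c s x : b \notin B ->
  (forall A, C1 (b |: A) = 0) -> (forall A, C2 (b |: A) = 0) ->
  kcomb B (mix_weights b c C1 C2) s.+1 x =
  point_mass_kernel (kcomb B C1 s.+1) (kcomb (b |: B) C2 s) (a b) c x.
Proof.
move=> bB C1b C2b.
have kcombE C B' s' : (forall A, C (b |: A) = 0) -> kcomb B' C s' x =
    \sum_(A : {set 'I_k} | b \notin A) (C A * (root_poly A).[x]) *:
                           (root_poly A * kerp (q (A :|: B')) (s' - #|A|) x).
  move=> Cb; rewrite /kcomb (sum_set_splitU1 b) [X in _ + X]big1 ?addr0 // => A _.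
  by rewrite Cb mul0r scale0r.
rewrite /point_mass_kernel (kcombE C1) // (kcombE C2) // /kcomb (sum_set_splitU1 b).
rewrite scaler_sumr mulr_sumr scaler_sumr /mix_weights; congr (_ + _).
  by apply: eq_bigr => A bA; rewrite (negbTE bA) scalerA mulrA.
apply: eq_bigr => A bA.
rewrite setU11 setU1K // root_poly_setU1 // cardsU1 bA add1n subSS.
rewrite -setUA setUCA hornerM hornerXsubC -!mul_polyC !polyCM; ring.
Qed.

Lemma kcomb_reproducing_setU1 S B b C1 C2 s :
  b \notin S -> b \notin B -> convex_weights S C1 -> convex_weights S C2 ->
  reproducing_kernel (mass_ip S B) s.+1 (kcomb B C1 s.+1) ->
  reproducing_kernel (mass_ip S (b |: B)) s (kcomb (b |: B) C2 s) ->
  exists C, convex_weights (b |: S) C /\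
    reproducing_kernel (mass_ip (b |: S) B) s.+1 (kcomb B C s.+1).
Proof.
move=> bS bB hC1 hC2 hK1 hK2.
set m := M b * (root_poly B).[a b] ^+ 2.
set kb := (kcomb B C1 s.+1 (a b)).[a b].
have m_gt0 : 0 < m by rewrite mulr_gt0 ?M_gt0 ?exprn_even_gt0 ?root_poly_neq0.
have kb_gt0 : 0 < kb.
  apply: kcomb_diag_gt0 => // [A|]; first exact: convex_weights_ge0 hC1.
  by have [-> //] := hC1; exact: sub0set.
set c := (1 + m * kb)^-1.
have mkb_gt0 : 0 < m * kb by exact: mulr_gt0.
have hc : c * (1 + m * kb) = 1 by rewrite mulVf // gt_eqF //; lra.
have c01 : 0 < c < 1 by rewrite invr_gt0 invf_lt1; lra.
exists (mix_weights b c C1 C2); split; first exact: convex_weights_mix.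
have -> : kcomb B (mix_weights b c C1 C2) s.+1 =
    point_mass_kernel (kcomb B C1 s.+1) (kcomb (b |: B) C2 s) (a b) c.
  by apply/funext => x; apply: kcomb_mix => // A; apply: convex_weights_setU1 bS.
apply: (point_mass_kernel_reproducing (@mass_ip_sym S B) (@mass_ip_linear S B)
          _ _ hK1 hK2 _ hc).
- by move=> p q'; rewrite mass_ip_setU1.
- by move=> p q'; rewrite mass_ip_mulXsubC.
- by rewrite gt_eqF.
Qed.

Lemma mass_kernel_decomposition S B s : [disjoint S & B] ->
  exists C, convex_weights S C /\ reproducing_kernel (mass_ip S B) s (kcomb B C s).
Proof.
move nS : #|S| => n; elim: n S B s nS => [|n IH] S B s nS SB.
  rewrite (cards0_eq nS); exists (uniform_weights R set0).
  split=> [|x]; first exact: convex_weights_uniform.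
  rewrite kcomb_set0; last exact: convex_weights_uniform.
  exact (kerp_reproducing (@mass_ip_sym set0 B) (@mass_ip_linear set0 B) (q_orthonormal B) s x).
have [b bS] : exists b, b \in S by apply/set0Pn; rewrite -card_gt0 nS.
set S' := S :\ b; rewrite -(setD1K bS) -/S'.
have nS' : #|S'| = n by move: nS; rewrite (cardsD1 b) bS add1n => -[].
have bS' : b \notin S' by rewrite setD11.
have bB : b \notin B by rewrite (disjointFr SB bS).
have S'B : [disjoint S' & B] := disjointWl (subD1set S b) SB.
have S'bB : [disjoint S' & b |: B].
  rewrite -setI_eq0; apply/eqP/setP => x; rewrite !inE.
  have [xS|] := boolP (x \in S); last by rewrite andbF.
  by rewrite (disjointFr SB xS) orbF andbT; case: eqP.
case: s => [|s].
  exists (uniform_weights R (b |: S')); split; first exact: convex_weights_uniform.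
  by rewrite kcomb0; exact: reproducing_kernel0 (@mass_ip_linear _ _).
have [C1 [hC1 hK1]] := IH S' B s.+1 nS' S'B.
have [C2 [hC2 hK2]] := IH S' (b |: B) s nS' S'bB.
exact: kcomb_reproducing_setU1 bS' bB hC1 hC2 hK1 hK2.
Qed.

Lemma horner_kcomb_kernel_shift C n x y :
  (kcomb set0 C n.+1 x).[y] =
  \sum_A C A * (\prod_(i in A) ((x - a i) * (y - a i))) * kernel_shift (q A) n #|A| x y.
Proof.
rewrite horner_kcomb; apply: eq_bigr => A _.
rewrite setU0 /root_poly !horner_prod -big_split /=; congr (_ * _ * _).
  by apply: eq_bigr => i _; rewrite !hornerXsubC.
rewrite /kernel_shift; case: leqP => An; first by rewrite subSn // horner_kerp.
by move: An; rewrite -subn_eq0 => /eqP ->; rewrite /kerp big_ord0 horner0.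
Qed.

Lemma kerp_mass_decomposition (P : nat -> {poly R}) s :
  orthonormal_polys (mass_ip setT set0) P ->
  exists C, convex_weights setT C /\ forall x, kerp P s x = kcomb set0 C s x.
Proof.
move=> hP; have TB : [disjoint setT & set0 : {set 'I_k}] by rewrite -setI_eq0 setI0.
have [C [hC hK]] := mass_kernel_decomposition s TB.
exists C; split=> // x.
by rewrite (reproducing_kernel_unique (@mass_ip_sym _ _) (@mass_ip_linear _ _) hP x hK).
Qed.

End MassPerturbation.

Section MassFunctionals.
Import mathcomp.boot.finset.
Variables (R : realType) (mu : {measure set (measurableTypeR R) -> \bar R}).
Variables (k : nat) (a : 'I_k -> R).

Lemma poly_ip_A_mass_ip (M : 'I_k -> R) :
  poly_ip_A mu a = mass_ip (int_poly mu) a M set0.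
Proof.
apply/funext => A; apply/funext => p; apply/funext => q.
rewrite /mass_ip /Lmass big_set0 addr0 /int_poly /poly_ip_A.
apply: eq_Rintegral => x _; rewrite !hornerM -expr2 horner_prod -prodrXl.
by congr (_ * _); apply: eq_bigr => i _; rewrite hornerXsubC.
Qed.

Lemma poly_ip_nu_meas_mass_ip (M : 'I_k -> {posnum R}) : finite_moments mu ->
  poly_ip (nu_meas mu a M) = mass_ip (int_poly mu) a (fun i => (M i)%:num) setT set0.
Proof.
move=> mu_moments; apply/funext => p; apply/funext => q.
rewrite /mass_ip /Lmass /root_poly big_set0 expr1n mul1r.
rewrite (eq_bigl (fun i => i \in 'I_k)) => [|i]; last by rewrite in_setT.
rewrite -Rintegral_nu_meas_horner //; apply: eq_Rintegral => x _.
by rewrite hornerM.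
Qed.

End MassFunctionals.

Local Open Scope classical_set_scope.
Local Open Scope ring_scope.

Theorem mainTheorem4 (R : realType) (mu : {measure set (measurableTypeR R) -> \bar R})
    (k : nat) (a : 'I_k -> R) (M : 'I_k -> {posnum R})
    (P : nat -> {poly R}) (q : {set 'I_k} -> nat -> {poly R}) :
  (0 < k)%N ->
  infinitely_many_points_of_increase mu ->
  finite_moments mu ->
  injective a ->
  (forall i : 'I_k, mu [set a i] = 0%E) ->
  orthonormal_polys (poly_ip (nu_meas mu a M)) P ->
  (forall A : {set 'I_k}, orthonormal_polys (poly_ip_A mu a A) (q A)) ->
  forall n : nat, exists C : {set 'I_k} -> R,
    (forall A : {set 'I_k}, 0 < C A < 1) /\
    \sum_(A : {set 'I_k}) C A = 1 /\
    (forall x y : R,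
      ker_poly P n x y =
      \sum_(A : {set 'I_k})
         C A * (\prod_(i in A) ((x - a i) * (y - a i))) * kernel_shift (q A) n #|A| x y).
Proof.
move=> k_gt0 _ mu_moments a_inj _ hP hq n.
rewrite (poly_ip_nu_meas_mass_ip _ _ mu_moments) in hP.
rewrite (poly_ip_A_mass_ip _ _ (fun i => (M i)%:num)) in hq.
have [C [hC KE]] := kerp_mass_decomposition (int_polyZD mu_moments) a_inj
  (fun i => gt0 (M i)) hq n.+1 hP.
exists C; split=> [A|]; first by apply: convex_weights_setT_bounds; rewrite ?card_ord.
split; first by case: hC.
by move=> x y; rewrite ker_polyE KE horner_kcomb_kernel_shift.
Qed.
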